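(* Let $n>1$ be an integer and $t\in\mathbb Z/(n)$ invertible. Let $j_0,\dots,j_{n-1}\in\mathbb Z/(n)$ (indices read in $\mathbb Z/(n)$) satisfy $j_i=j_{-i}$ and $j_{t^s i}=t^s j_i-(t^s-1)j_0$ for all $i\in\mathbb Z/(n)$ and all $s\in\mathbb Z$, and suppose that for every nonzero $i\in\mathbb Z/(n)$ there is $k\in\mathbb Z/(n)$ with $j_{i+k}-j_k$ invertible. Define $\sigma_{(i,j)}(k,l)=(tk+j,\ t(l-j_{tk+j-i}))$ on $(\mathbb Z/(n))^2$ and $r((i,j),(k,l))=(\sigma_{(i,j)}(k,l),\sigma^{-1}_{\sigma_{(i,j)}(k,l)}(i,j))$. Then $((\mathbb Z/(n))^2,r)$ is an indecomposable and irretractable solution of the YBE. If moreover (i) $j_0-j_i$ is invertible for every nonzero $i\in\mathbb Z/(n)$, and (ii) $j_i-j_k$ is invertible whenever $j_i\ne j_k$, then $((\mathbb Z/(n))^2,r)$ is a simple solution of the YBE.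
   Context: A solution of the YBE is a pair $(X,r)$, $X$ nonempty, $r:X\times X\to X\times X$, $r(x,y)=(\sigma_x(y),\gamma_y(x))$, with $r^2=\mathrm{id}$, all $\sigma_x,\gamma_x$ bijective, and $r_{12}r_{23}r_{12}=r_{23}r_{12}r_{23}$ on $X^3$. Indecomposable: $\langle\sigma_x\rangle\le \mathrm{Sym}_X$ transitive on $X$. Irretractable: $\sigma_x\ne\sigma_y$ for $x\ne y$. A homomorphism of solutions $f:(X,r)\to(Y,s)$ (with $s(t,z)=(\sigma'_t(z),\gamma'_z(t))$) is a map with $f(\sigma_x(y))=\sigma'_{f(x)}(f(y))$; $(X,r)$ is simple if $|X|>1$ and every surjective homomorphism of solutions $f:(X,r)\to(Y,s)$ is bijective or has $|Y|=1$. *)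

From HB Require Import structures.
From mathcomp Require Import all_boot all_order all_fingroup all_algebra.
Set Implicit Arguments. Unset Strict Implicit. Unset Printing Implicit Defensive.
Import GRing.Theory.

Section YBE.
Variable X : Type.
Implicit Types (r : X * X -> X * X).

(* writing r(x,y) = (sigma_x(y), gamma_y(x)) *)
Definition ybe_sigma r (x y : X) : X := (r (x, y)).1.
Definition ybe_gamma r (y x : X) : X := (r (x, y)).2.

Definition r12 r (w : X * X * X) : X * X * X :=
  let: (x, y, z) := w in let: (a, b) := r (x, y) in (a, b, z).
Definition r23 r (w : X * X * X) : X * X * X :=
  let: (x, y, z) := w in let: (b, c) := r (y, z) in (x, b, c).

Definition is_solution r : Prop :=
  [/\ (forall p, r (r p) = p),
      (forall x, bijective (ybe_sigma r x)),
      (forall y, bijective (ybe_gamma r y)) &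
      (forall w, r12 r (r23 r (r12 r w)) = r23 r (r12 r (r23 r w)))].

Definition irretractable r : Prop :=
  forall x y : X, x <> y -> ybe_sigma r x <> ybe_sigma r y.

End YBE.

Definition sol_hom (X Y : Type) (r : X * X -> X * X) (s : Y * Y -> Y * Y) (f : X -> Y) : Prop :=
  forall x y, f (ybe_sigma r x y) = ybe_sigma s (f x) (f y).

Definition simple_solution (X : Type) (r : X * X -> X * X) : Prop :=
  (exists x y : X, x <> y) /\
  forall (Y : Type) (s : Y * Y -> Y * Y) (f : X -> Y),
    is_solution s -> sol_hom r s f -> (forall y, exists x, f x = y) ->
    bijective f \/ (exists y0 : Y, forall y, y = y0).

Section Finite.
Variable X : finType.

(* the permutation underlying f (f is bijective in all our uses) *)
Definition fun_perm (f : X -> X) : {perm X} := @insubd _ _ {perm X} (1%g : {perm X}) [ffun x => f x].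

Definition indecomposable (r : X * X -> X * X) : Prop :=
  [transitive <<[set fun_perm (ybe_sigma r x) | x : X]>>, on [set: X] | 'P].

Definition finv_map (f : X -> X) (z : X) : X := odflt z [pick y | f y == z].
End Finite.

Section Concrete.
Variables (n : nat) (t : 'Z_n) (J : 'Z_n -> 'Z_n).
Local Open Scope ring_scope.

Definition sigmaJ (x y : 'Z_n * 'Z_n) : 'Z_n * 'Z_n :=
  (t * y.1 + x.2, t * (y.2 - J (t * y.1 + x.2 - x.1))).

Definition rJ (p : ('Z_n * 'Z_n) * ('Z_n * 'Z_n)) : ('Z_n * 'Z_n) * ('Z_n * 'Z_n) :=
  let z := sigmaJ p.1 p.2 in (z, finv_map (sigmaJ z) p.1).
End Concrete.

From HB Require Import structures.
From mathcomp Require Import all_boot all_order all_fingroup all_algebra.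
From mathcomp Require Import ring.
From Stdlib Require Import FunctionalExtensionality Classical ClassicalEpsilon.
Set Implicit Arguments. Unset Strict Implicit. Unset Printing Implicit Defensive.
Import GRing.Theory.
Local Open Scope ring_scope.

(* Proof strategy.
   1. A map r(x,y) = (s_x y, s^-1_{s_x y} x) built from bijections s_x
      with inverses tau_x is always involutive, and it satisfies the braid relation as soon as
      s_x s_y = s_{s_x y} s_{s^-1_{s_x y} x} (the cycle-set condition).
   2. For sigma_{(i,j)}(k,l) = (tk+j, t(l - J(tk+j-i))) the inverse tau is explicit,
      r = rJ has the shape of step 1, the cycle-set condition follows from
      J even and J(t^{+-1} i) = t^{+-1} J i - (t^{+-1} - 1) J 0, and gamma is
      inverted explicitly: rJ is a solution.
   3. The composite sigma_{(i,j)} tau_{(i',j)} fixes the column k and translates it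
      by t (J(k-i') - J(k-i)), a unit for a suitable k; translations by a unit
      reach every element of Z/(n).  This gives indecomposability, and the
      hypothesis on J gives irretractability.
   4. A homomorphism of solutions f is compatible with every sigma_x tau_{x'} with
      f x = f x'.  Identifying two distinct points therefore forces f to collapse
      a whole column, then all of (Z/(n))^2; under (i) every identification reduces
      to this case, so (Z/(n))^2 is simple. *)

Lemma Zp_unit_shift_closed n (w : 'Z_n) (P : 'Z_n -> Prop) :
  w \is a GRing.unit -> (forall l, P l -> P (l + w)) ->
  forall l, P l -> forall l', P l'.
Proof.
move=> wu Pw l Pl l'.
have Pm m : P (l + w *+ m).
  by elim: m => [|m IH]; rewrite ?mulr0n ?addr0 // mulrSr addrA; apply: Pw.
have hw : w * w^-1 = 1 by rewrite mulrV.
have -> : l' = l + w *+ val ((l' - l) * w^-1).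
  by rewrite -mulr_natr natr_Zp; ring: hw.
exact: Pm.
Qed.

(* The sum of two units of Z/(n) is always a double: for n odd since 2 is a
   unit, for n even since units are then odd. *)
Lemma Zp_sum_units_double n (u w : 'Z_n) : (1 < n)%N ->
  u \is a GRing.unit -> w \is a GRing.unit -> exists p : 'Z_n, p + p = u + w.
Proof.
move=> n_gt1 uu wu; have [n_odd|n_even] := boolP (odd n).
  have two_unit : (2%:R : 'Z_n) \is a GRing.unit by rewrite unitZpE // coprimen2.
  have h : 2%:R^-1 * (2%:R : 'Z_n) = 1 by rewrite mulVr.
  by exists ((u + w) / 2%:R); ring: h.
have unit_odd (z : 'Z_n) : z \is a GRing.unit -> odd (val z).
  rewrite -[z in z \is a _]natr_Zp unitZpE // => /eqP cop.
  apply/negPn/negP => z_even.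
  have : (2 %| gcdn n (val z))%N by rewrite dvdn_gcd !dvdn2 n_even z_even.
  by rewrite cop.
have sum_even : ~~ odd (val u + val w) by rewrite oddD !unit_odd.
exists ((val u + val w)./2)%:R.
by rewrite -natrD addnn halfK (negbTE sum_even) subn0 natrD !natr_Zp.
Qed.

Section CycleSetSolutions.
Variables (X : Type) (s tau : X -> X -> X).
Hypotheses (s_tauK : forall x, cancel (tau x) (s x))
           (tau_sK : forall x, cancel (s x) (tau x)).

Definition cycle_r (p : X * X) : X * X := (s p.1 p.2, tau (s p.1 p.2) p.1).

Lemma cycle_r_involutive p : cycle_r (cycle_r p) = p.
Proof. by case: p => x y; rewrite /cycle_r /= s_tauK tau_sK. Qed.

Hypothesis cycle_cond :
  forall x y z, s x (s y z) = s (s x y) (s (tau (s x y) x) z).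

Lemma cycle_cond_sym x u z : s x (s (tau x u) z) = s u (s (tau u x) z).
Proof. by rewrite cycle_cond s_tauK. Qed.

Lemma cycle_r_braid w :
  r12 cycle_r (r23 cycle_r (r12 cycle_r w)) = r23 cycle_r (r12 cycle_r (r23 cycle_r w)).
Proof.
case: w => [[x y] z]; rewrite /r12 /r23 /cycle_r /=.
set u := s x y; set v := tau u x; set p := s v z; set a := s y z; set b := tau a y.
have first_eq : s u p = s x a by rewrite /p /v /a -cycle_cond_sym /u tau_sK.
rewrite first_eq; set F := s x a; set c := tau F x.
have second_eq : s F (s c b) = u by rewrite /c -cycle_cond_sym /F tau_sK /b s_tauK.
have tau_second : tau F u = s c b by rewrite -second_eq tau_sK.
rewrite tau_second.
have third_eq : s (s c b) (tau p v) = c.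
  apply: (can_inj (tau_sK F)); rewrite {2}/c s_tauK -tau_second -cycle_cond_sym.
  have F_eq : F = s u p by rewrite first_eq.
  by rewrite F_eq tau_sK s_tauK /v s_tauK.
by rewrite -[X in tau (s c b) X]third_eq tau_sK.
Qed.

Lemma cycle_r_solution :
  (forall y, bijective (fun x => tau (s x y) x)) -> is_solution cycle_r.
Proof.
move=> gamma_bij; split => //.
- exact: cycle_r_involutive.
- by move=> x; exists (tau x); [exact: tau_sK | exact: s_tauK].
- exact: cycle_r_braid.
Qed.

End CycleSetSolutions.

Lemma sol_hom_sigma_congr (X Y : Type) (r : X * X -> X * X) (s : Y * Y -> Y * Y)
    (f : X -> Y) x x' y y' :
  sol_hom r s f -> f x = f x' -> f y = f y' ->
  f (ybe_sigma r x y) = f (ybe_sigma r x' y').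
Proof. by move=> f_hom fx fy; rewrite !f_hom fx fy. Qed.

Lemma fun_permE (X : finType) (f : X -> X) : injective f -> fun_perm f =1 f.
Proof.
move=> f_inj y; rewrite /fun_perm [@fun_of_perm]unlock insubdK ?ffunE //.
by apply/injectiveP => a b; rewrite !ffunE; apply: f_inj.
Qed.

Section ConcreteSolution.
Variables (n : nat) (t : 'Z_n) (J : 'Z_n -> 'Z_n).
Hypotheses (t_unit : t \is a GRing.unit) (J_even : forall i, J (- i) = J i).

Let tK : t * t^-1 = 1. Proof. by rewrite mulrV. Qed.

Definition tauJ (x y : 'Z_n * 'Z_n) : 'Z_n * 'Z_n :=
  (t^-1 * (y.1 - x.2), t^-1 * y.2 + J (y.1 - x.1)).

Lemma sigmaJ_tauK x : cancel (tauJ x) (sigmaJ t J x).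
Proof.
case: x => i j [k l]; rewrite /sigmaJ /tauJ /=.
have -> : t * (t^-1 * (k - j)) + j = k by ring: tK.
by congr pair; rewrite addrK; ring: tK.
Qed.

Lemma tauJ_sigmaK x : cancel (sigmaJ t J x) (tauJ x).
Proof.
have tK' : t^-1 * t = 1 by rewrite mulVr.
case: x => i j [k l]; rewrite /sigmaJ /tauJ /=.
have -> : t * k + j - j = t * k by ring.
by congr pair; ring: tK'.
Qed.

Lemma finv_map_sigmaJ x : finv_map (sigmaJ t J x) =1 tauJ x.
Proof.
move=> z; rewrite /finv_map; case: pickP => [y /eqP <- | none] /=.
  by rewrite tauJ_sigmaK.
by move: (none (tauJ x z)); rewrite sigmaJ_tauK eqxx.
Qed.

Lemma rJ_cycle : rJ t J = cycle_r (sigmaJ t J) tauJ.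
Proof.
by apply: functional_extensionality => p; rewrite /rJ /cycle_r finv_map_sigmaJ.
Qed.

Definition gammaJ_inv (y x : 'Z_n * 'Z_n) : 'Z_n * 'Z_n :=
  let m := t * y.1 - t * (x.1 - x.2 + y.2) in
  (t * (x.2 - J m) + t * (x.1 - x.2 + y.2), t * (x.2 - J m)).

Lemma gammaJ_bij y : bijective (fun x => tauJ (sigmaJ t J x y) x).
Proof.
apply: injF_bij; apply: (can_inj (g := gammaJ_inv y)) => -[i j].
case: y => k l; rewrite /gammaJ_inv /sigmaJ /tauJ /=.
have -> : J (i - (t * k + j)) = J (t * k + j - i) by rewrite -J_even opprB.
set m := J (t * k + j - i).
have -> : t * k - t * (t^-1 * (i - t * (l - m)) - (t^-1 * j + m) + l) = t * k + j - i
  by ring: tK.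
by rewrite -/m; congr pair; ring: tK.
Qed.

Lemma sigmaJ_cycle_cond :
  (forall i, J (t * i) = t * J i - (t - 1) * J 0) ->
  (forall i, J (t^-1 * i) = t^-1 * J i - (t^-1 - 1) * J 0) ->
  forall x y z, sigmaJ t J x (sigmaJ t J y z) =
    sigmaJ t J (sigmaJ t J x y) (sigmaJ t J (tauJ (sigmaJ t J x y) x) z).
Proof.
move=> J_t J_tinv [i j] [k l] [a b]; rewrite /sigmaJ /tauJ /=.
have -> : J (i - (t * k + j)) = J (t * k + j - i) by rewrite -J_even opprB.
set m := J (t * k + j - i).
congr pair; first by ring: tK.
have -> : t * a + (t^-1 * j + m) - t^-1 * (i - t * (l - m)) =
  t^-1 * (t * (t * a + l) + j - i) by ring: tK.
have -> : t * (t * a + (t^-1 * j + m)) + t * (l - m) - (t * k + j) =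
  t * (t * a + l - k) by ring: tK.
by rewrite J_tinv J_t; ring: tK.
Qed.

Lemma rJ_solution :
  (forall i, J (t * i) = t * J i - (t - 1) * J 0) ->
  (forall i, J (t^-1 * i) = t^-1 * J i - (t^-1 - 1) * J 0) ->
  is_solution (rJ t J).
Proof.
move=> J_t J_tinv; rewrite rJ_cycle.
apply: cycle_r_solution; [exact: sigmaJ_tauK | exact: tauJ_sigmaK | | exact: gammaJ_bij].
exact: sigmaJ_cycle_cond.
Qed.

Lemma sigmaJ_tauJ i j i' j' k l :
  sigmaJ t J (i, j) (tauJ (i', j') (k, l)) =
  (k + (j - j'), l + t * (J (k - i') - J (k + (j - j') - i))).
Proof.
rewrite /sigmaJ /tauJ /=.
have -> : t * (t^-1 * (k - j')) + j = k + (j - j') by ring: tK.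
by congr pair; ring: tK.
Qed.

Lemma sigmaJ_tauJ_column i i' j k l :
  sigmaJ t J (i, j) (tauJ (i', j) (k, l)) = (k, l + t * (J (k - i') - J (k - i))).
Proof. by rewrite sigmaJ_tauJ subrr addr0. Qed.

Hypothesis J_sep : forall i, i != 0 -> exists k, J (i + k) - J k \is a GRing.unit.

Lemma column_translation a a' : a != a' ->
  exists k, t * (J (k - a') - J (k - a)) \is a GRing.unit.
Proof.
rewrite -subr_eq0 => /J_sep [k1 k1u]; exists (a + k1).
have -> : a + k1 - a' = a - a' + k1 by ring.
have -> : a + k1 - a = k1 by ring.
by rewrite unitrM t_unit.
Qed.

(* Column translations move (k,l) to every (k,l'), and sigma_{(0,k)} (0,0) lies in
   column k, so the orbit of (0,0) is everything. *)
Lemma rJ_indecomposable : indecomposable (rJ t J).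
Proof.
rewrite rJ_cycle /indecomposable; set G := generated _.
have permE x : fun_perm (sigmaJ t J x) =1 sigmaJ t J x.
  by apply: fun_permE; apply: can_inj (tauJ_sigmaK x).
have perm_in_G x : fun_perm (sigmaJ t J x) \in G.
  by apply: mem_gen; apply/imsetP; exists x.
have permVE x y : ((fun_perm (sigmaJ t J x))^-1)%g y = tauJ x y.
  by rewrite -{1}(sigmaJ_tauK x y) -permE permK.
have orbit_column k l l' : (k, l) \in orbit 'P G (0, 0) -> (k, l') \in orbit 'P G (0, 0).
  have [c cu] := column_translation (oner_neq0 'Z_n).
  move=> kl_in.
  apply: (Zp_unit_shift_closed cu (P := fun l => (k, l) \in orbit 'P G (0, 0)) _ kl_in).
  move=> {kl_in}l kl_in; apply: (orbit_trans _ kl_in); apply/orbitP.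
  exists ((fun_perm (sigmaJ t J (k - c, 0)))^-1 * fun_perm (sigmaJ t J (k - c + 1, 0)))%g.
    by rewrite groupM ?groupV.
  rewrite /= apermE permM permVE permE sigmaJ_tauJ_column.
  have -> : k - (k - c) = c - 0 by ring.
  by have -> : k - (k - c + 1) = c - 1 by ring.
have all_in y : y \in orbit 'P G (0, 0).
  case: y => k l.
  have first_col : sigmaJ t J (0, k) (0, 0) = (k, (sigmaJ t J (0, k) (0, 0)).2).
    by rewrite {1}/sigmaJ /= mulr0 add0r.
  apply: (orbit_column k (sigmaJ t J (0, k) (0, 0)).2).
  by rewrite -first_col -permE -apermE mem_orbit.
apply/imsetP; exists (0, 0); first by rewrite inE.
by apply/setP => y; rewrite inE all_in.
Qed.

(* sigma_{(i,j)} = sigma_{(i',j)} with i != i' contradicts a column translation. *)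
Lemma rJ_irretractable : irretractable (rJ t J).
Proof.
rewrite rJ_cycle => -[i j] [i' j'] neq eq_sigma.
have e y : sigmaJ t J (i, j) y = sigmaJ t J (i', j') y := congr1 (fun g => g y) eq_sigma.
have ejj : j = j' by have := congr1 fst (e (0, 0)); rewrite /= mulr0 !add0r.
subst j'.
have [k ku] : exists k, t * (J (k - i') - J (k - i)) \is a GRing.unit.
  by apply: column_translation; apply: contra_notN neq => /eqP ->.
have := congr1 snd (e (tauJ (i', j) (k, 0))).
rewrite sigmaJ_tauJ_column sigmaJ_tauK /= add0r => E.
by move: ku; rewrite E unitr0.
Qed.

Section Quotients.
Variables (Y : Type) (s : Y * Y -> Y * Y) (f : 'Z_n * 'Z_n -> Y).
Hypothesis f_hom : sol_hom (rJ t J) s f.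

Definition collapses : Prop := forall p q, f p = f q.

Lemma f_sigma_congr x x' y y' :
  f x = f x' -> f y = f y' -> f (sigmaJ t J x y) = f (sigmaJ t J x' y').
Proof.
have := @sol_hom_sigma_congr _ _ (cycle_r (sigmaJ t J) tauJ) s f x x' y y'.
by rewrite -rJ_cycle; apply.
Qed.

Lemma f_transfer x x' y : f x = f x' -> f y = f (sigmaJ t J x (tauJ x' y)).
Proof. by move=> fx; rewrite -{1}(sigmaJ_tauK x' y); apply: f_sigma_congr. Qed.

(* Collapsing one column collapses everything: sigma_{(0,K-tk)} maps column k
   onto column K, and sigma_{(0,K)} (0,0) lies in column K. *)
Lemma collapse_of_column k : (forall l l', f (k, l) = f (k, l')) -> collapses.
Proof.
move=> col_k.
have col K L L' : f (K, L) = f (K, L').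
  have first_tau L0 : tauJ (0, K - t * k) (K, L0) = (k, (tauJ (0, K - t * k) (K, L0)).2).
    by rewrite /tauJ /=; congr pair; ring: tK.
  rewrite -(sigmaJ_tauK (0, K - t * k) (K, L)) -(sigmaJ_tauK (0, K - t * k) (K, L')).
  by apply: f_sigma_congr => //; rewrite first_tau [tauJ _ (K, L')]first_tau.
have across K K' : f (K, 0) = f (K', 0).
  have := f_sigma_congr (y := (0, 0)) (y' := (0, 0)) (col 0 K K') erefl.
  rewrite /sigmaJ /= !mulr0 !add0r => e.
  by rewrite (col K 0 (t * - J (K - 0))) e; apply: col.
by move=> [K L] [K' L']; rewrite (col K L 0) (col K' L' 0) (across K K').
Qed.

(* Identifying two points of one row makes some column translation invariant,
   which collapses that column. *)
Lemma collapse_of_row_pair a a' b :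
  a != a' -> f (a, b) = f (a', b) -> collapses.
Proof.
move=> neq fab; have [k ku] := column_translation neq.
apply: (collapse_of_column (k := k)) => l l'.
apply: (Zp_unit_shift_closed ku (P := fun l' => f (k, l) = f (k, l')) _ (erefl (f (k, l)))).
by move=> l1 ->; rewrite (f_transfer (k, l1) fab) sigmaJ_tauJ_column.
Qed.

(* If j != j' and (i-j) - (i'-j') = 2p, then sigma_{(i,j)} tau_{(i',j')} maps
   (i'+p, 0) to (i'+p+j-j', 0): two distinct points of one row get identified. *)
Lemma collapse_of_diagonal_pair i j i' j' p :
  j != j' -> p + p = (i - j) - (i' - j') -> f (i, j) = f (i', j') -> collapses.
Proof.
move=> njj hp fij; have := f_transfer (i' + p, 0) fij; rewrite sigmaJ_tauJ.
have -> : i' + p + (j - j') - i = - (i' + p - i').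
  have -> : i = p + p + j + (i' - j') by rewrite hp; ring.
  by ring.
rewrite J_even subrr mulr0 addr0.
apply: collapse_of_row_pair; rewrite -subr_eq0 opprD addrA subrr add0r oppr_eq0.
by rewrite subr_eq0.
Qed.

Hypotheses (J0_sep : forall i, i != 0 -> J 0 - J i \is a GRing.unit).

Lemma shift_to_unit_row i j i' j' :
  f (i, j) = f (i', j') -> (i - j) - (i' - j') != 0 ->
  [/\ f (i', 0) = f (i' + (j - j'), t * (J 0 - J ((i - j) - (i' - j')))),
      t * (J 0 - J ((i - j) - (i' - j'))) \is a GRing.unit &
      0 != t * (J 0 - J ((i - j) - (i' - j')))].
Proof.
move=> fij g_neq0; have e_unit : t * (J 0 - J ((i - j) - (i' - j'))) \is a GRing.unit.
  by rewrite unitrM t_unit J0_sep.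
split => //; last by apply: contraTneq e_unit => <-; rewrite unitr0.
rewrite (f_transfer (i', 0) fij) sigmaJ_tauJ subrr add0r.
have -> : i' + (j - j') - i = - ((i - j) - (i' - j')) by ring.
by rewrite J_even.
Qed.

Hypothesis n_gt1 : (1 < n)%N.

(* Every nontrivial identification collapses: after at most two applications of
   shift_to_unit_row the two second coordinates are units, whose sum is a double. *)
Lemma collapse_of_pair x x' : x != x' -> f x = f x' -> collapses.
Proof.
case: x x' => i j [i' j'] neq fij.
have [ejj | njj] := eqVneq j j'.
  subst j'.
  by apply: (collapse_of_row_pair (b := j)) fij; apply: contra_neq neq => ->.
have [g0 | g_neq0] := eqVneq ((i - j) - (i' - j')) 0.
  by apply: (collapse_of_diagonal_pair (p := 0)) fij; rewrite // addr0 g0.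
have [f1 e1_unit e1_neq0] := shift_to_unit_row fij g_neq0.
set e1 := t * _ in f1 e1_unit e1_neq0; set i1 := i' + (j - j') in f1.
have [g1 | g1_neq0] := eqVneq ((i' - 0) - (i1 - e1)) 0.
  by apply: (collapse_of_diagonal_pair (p := 0)) f1; rewrite // addr0 g1.
have [f2 e2_unit e2_neq0] := shift_to_unit_row f1 g1_neq0.
set e2 := t * _ in f2 e2_unit e2_neq0.
have [p hp] := Zp_sum_units_double n_gt1 e1_unit e2_unit.
by apply: (collapse_of_diagonal_pair (p := p)) f2; rewrite // hp; ring.
Qed.

End Quotients.

Lemma rJ_simple : (1 < n)%N ->
  (forall i, i != 0 -> J 0 - J i \is a GRing.unit) -> simple_solution (rJ t J).
Proof.
move=> n_gt1 J0_sep; split.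
  by exists (0, 0), (1, 0); case=> /esym/eqP; rewrite oner_eq0.
move=> Y s f _ f_hom f_surj.
have [[x [x' [neq fx]]] | no_pair] := classic (exists x x', x <> x' /\ f x = f x').
  right; exists (f (0, 0)) => y; have [z <-] := f_surj y.
  by apply: (collapse_of_pair f_hom J0_sep n_gt1 (x := x) (x' := x')) => //; apply/eqP.
left; pose g y := proj1_sig (constructive_indefinite_description _ (f_surj y)).
have gK y : f (g y) = y by rewrite /g; case: constructive_indefinite_description.
exists g => [x|]; last exact: gK.
by apply: NNPP => neq; apply: no_pair; exists (g (f x)), x; rewrite gK.
Qed.

End ConcreteSolution.

Theorem mainTheorem5 (n : nat) (t : 'Z_n) (J : 'Z_n -> 'Z_n) :
  (1 < n)%N ->
  t \is a GRing.unit ->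
  (forall i : 'Z_n, J (- i) = J i) ->
  (forall (i : 'Z_n) (s : int), J (t ^ s * i) = t ^ s * J i - (t ^ s - 1) * J 0) ->
  (forall i : 'Z_n, i != 0 -> exists k : 'Z_n, J (i + k) - J k \is a GRing.unit) ->
  (is_solution (rJ t J) /\ indecomposable (rJ t J) /\ irretractable (rJ t J)) /\
  ((forall i : 'Z_n, i != 0 -> J 0 - J i \is a GRing.unit) ->
   (forall i k : 'Z_n, J i != J k -> J i - J k \is a GRing.unit) ->
   simple_solution (rJ t J)).
Proof.
move=> n_gt1 t_unit J_even J_pow J_sep.
have J_t i : J (t * i) = t * J i - (t - 1) * J 0.
  by have := J_pow i 1; rewrite expr1z.
have J_tinv i : J (t^-1 * i) = t^-1 * J i - (t^-1 - 1) * J 0.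
  by have := J_pow i (-1); rewrite exprN1.
split; first split; [exact: rJ_solution | split |].
- exact: rJ_indecomposable.
- exact: rJ_irretractable.
- by move=> J0_sep _; apply: rJ_simple.
Qed.
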